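(* Let $d=1$ and let $\mathcal{U}$ be an update family on $\mathbb{Z}$ for which $-1$ is a stable direction (i.e. no $X\in\mathcal{U}$ satisfies $X\subset\{1,2,3,\dots\}$). Let $n\ge1$ and assume $\mathcal{H}_{n-1}$ holds. Then for every $\Lambda\subset\mathbb{Z}$ with $\mathcal{P}_n\subset\Lambda$ and every $\eta\in V(n,\Lambda)\setminus\{1_\Lambda\}$, $\eta$ has at least one zero in $\Lambda\setminus\mathcal{P}_{n-1}$.
   Context: An update family is a set $\mathcal{U}$ of finitely many finite nonempty subsets of $\mathbb{Z}\setminus\{0\}$. For $\Lambda\subset\mathbb{Z}$, configurations are elements of $\{0,1\}^\Lambda$; $1_\Lambda$ is the all-ones configuration; $\eta^s$ is $\eta$ with the state at $s$ flipped. A move from $\eta$ to $\eta'$ is legal if $\eta'=\eta$, or $\eta'=\eta^s$ for some $s\in\Lambda$ and some $X\in\mathcal{U}$ has all sites of $s+X$ in state $0$ in the configuration equal to $\eta$ on $\Lambda$ and $0$ outside $\Lambda$. A legal path is a finite sequence $(\eta^j)_{0\le j\le m}$, $m\ge 1$, with all consecutive moves legal; it is $n$-legal if every $\eta^j$ has at most $n$ zeroes in $\Lambda$. $V(n,\Lambda)$ is the set of configurations reachable from $1_\Lambda$ by an $n$-legal path. Let $r=\max\{|x-y| : x,y\in X\cup\{0\}, X\in\mathcal{U}\}$, and for $n\in\mathbb{N}$ let $a_n=r(2^n-1)$, $b_n=rn2^{n-1}$, $\mathcal{P}_n=\{-a_n,\dots,b_n\}$. $\mathcal{H}_n$ denotes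 the statement: for every $\Lambda\subset\mathbb{Z}$ with $\mathcal{P}_n\subset\Lambda$ and every $\eta\in V(n,\Lambda)$, $\eta_0=1$. *)

From Stdlib Require Import ZArith List.
Import ListNotations.
Open Scope Z_scope.

Definition update_family (U : list (list Z)) : Prop :=
  forall X, In X U -> X <> [] /\ ~ In 0 X.

(* Configurations on Lambda are represented by functions Z -> bool
   (true = state 1, false = state 0); only values on Lambda matter.
   Paths start from the constant-true function and only flip sites in
   Lambda, so reachable configurations are 1 outside Lambda. *)
Definition config := Z -> bool.

Definition ones : config := fun _ => true.

Definition flip (eta : config) (s : Z) : config :=
  fun x => if Z.eqb x s then negb (eta x) else eta x.

(* site y is in state 0 in the configuration equal to eta on Lambda and
   0 outside Lambda *)
Definition zero_ext (Lam : Z -> Prop) (eta : config) (y : Z) : Prop :=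
  Lam y -> eta y = false.

Definition legal_move (U : list (list Z)) (Lam : Z -> Prop)
    (eta eta' : config) : Prop :=
  eta' = eta \/
  exists s, Lam s /\ eta' = flip eta s /\
    exists X, In X U /\ forall x, In x X -> zero_ext Lam eta (s + x).

Definition at_most_zeros (n : nat) (Lam : Z -> Prop) (eta : config) : Prop :=
  exists l : list Z, (length l <= n)%nat /\
    forall x, Lam x -> eta x = false -> In x l.

Definition V (U : list (list Z)) (n : nat) (Lam : Z -> Prop) (eta : config) : Prop :=
  exists (m : nat) (p : nat -> config),
    (1 <= m)%nat /\ p 0%nat = ones /\ p m = eta /\
    (forall j, (j < m)%nat -> legal_move U Lam (p j) (p (S j))) /\
    (forall j, (j <= m)%nat -> at_most_zeros n Lam (p j)).

Definition maxl (l : list Z) : Z := fold_right Z.max 0 l.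

(* r = max { |x - y| : x, y in X u {0}, X in U } *)
Definition range_r (U : list (list Z)) : Z :=
  maxl (map (fun X => maxl (map (fun x => maxl (map (fun y => Z.abs (x - y)) (0 :: X))) (0 :: X))) U).

Definition a_n (U : list (list Z)) (n : nat) : Z :=
  range_r U * (2 ^ Z.of_nat n - 1).

Definition b_n (U : list (list Z)) (n : nat) : Z :=
  range_r U * Z.of_nat n * 2 ^ (Z.of_nat n - 1).

Definition P (U : list (list Z)) (n : nat) (x : Z) : Prop :=
  - a_n U n <= x <= b_n U n.

Definition H (U : list (list Z)) (n : nat) : Prop :=
  forall Lam : Z -> Prop, (forall x, P U n x -> Lam x) ->
    forall eta, V U n Lam eta -> eta 0 = true.

Definition neg1_stable (U : list (list Z)) : Prop :=
  ~ exists X, In X U /\ forall x, In x X -> 0 < x.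

From Stdlib Require Import ZArith List Classical Lia.
Open Scope Z_scope.

(* Since -1 is a stable direction, every rule X contains a site x < 0 with
   |x| <= r, so a site of P_n can only flip when a site at most r to its left is
   0 or lies outside P_n: restricted to P_n the dynamics is a one-sided,
   East-type dynamics whose left boundary -a_n acts as a permanent zero.  For
   such a dynamics started from all ones, with at most k zeroes no zero ever gets
   further than A_k = r (2^k - 1) from the boundary, and with k + 1 zeroes every
   zero has a zero within A_k + r of the boundary to its left; both follow by a
   joint induction on k with A_(k+1) = 2 A_k + r.  With k = n - 1 the second
   statement puts a zero in [-a_n, -a_(n-1) - 1], outside P_(n-1). *)

(* Sites outside [D] count as zeroes. *)
Definition east_move (r : Z) (D : Z -> Prop) (q q' : config) : Prop :=
  (forall x, D x -> q' x = q x) \/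
  exists s, D s /\ (forall x, D x -> q' x = if Z.eqb x s then negb (q x) else q x) /\
    exists d, 1 <= d <= r /\ (D (s - d) -> q (s - d) = false).

Definition east_path (r : Z) (D : Z -> Prop) (k : nat) (q : nat -> config) (m : nat) : Prop :=
  (forall j, (j < m)%nat -> east_move r D (q j) (q (S j))) /\
  (forall j, (j <= m)%nat -> at_most_zeros k D (q j)).

Definition all_ones (D : Z -> Prop) (q : config) : Prop := forall x, D x -> q x = true.

Fixpoint east_span (r : Z) (k : nat) : Z :=
  match k with O => 0 | S k => 2 * east_span r k + r end.

Lemma east_span_eq r k : east_span r k = r * (2 ^ Z.of_nat k - 1).
Proof.
  induction k as [|k IH]; [simpl; lia|].
  change (east_span r (S k)) with (2 * east_span r k + r).
  rewrite IH, Nat2Z.inj_succ, Z.pow_succ_r by lia. lia.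
Qed.

Lemma east_span_nonneg r k : 0 <= r -> 0 <= east_span r k.
Proof.
  intros Hr. rewrite east_span_eq.
  assert (0 < 2 ^ Z.of_nat k) by (apply Z.pow_pos_nonneg; lia).
  nia.
Qed.

Lemma not_all_ones_zero D q : ~ all_ones D q -> exists x, D x /\ q x = false.
Proof.
  intros Hn. apply not_all_ex_not in Hn as [x Hx].
  exists x. apply imply_to_and in Hx as [Dx Hqx].
  split; [auto|apply Bool.not_true_is_false, Hqx].
Qed.

Lemma east_move_sym r D q q' : east_move r D q q' -> east_move r D q' q.
Proof.
  intros [Hid|[s [Ds [Hf [d [Hd Hz]]]]]].
  - left; intros x Dx; rewrite Hid; auto.
  - right; exists s; split; [auto|split].
    + intros x Dx; rewrite (Hf x Dx); destruct (Z.eqb x s); auto.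
      destruct (q x); auto.
    + exists d; split; [auto|]; intros Dsd. rewrite (Hf _ Dsd).
      replace (Z.eqb (s - d) s) with false by (symmetry; apply Z.eqb_neq; lia). auto.
Qed.

Lemma east_move_sub r D D' q q' :
  (forall x, D' x -> D x) -> east_move r D q q' -> east_move r D' q q'.
Proof.
  intros Hs [Hid|[s [Ds [Hf [d [Hd Hz]]]]]].
  - left; auto.
  - destruct (classic (D' s)) as [D's|nD's].
    + right; exists s; split; [auto|split; auto]. exists d; auto.
    + left; intros x Dx. rewrite (Hf x (Hs x Dx)).
      replace (Z.eqb x s) with false; auto.
      symmetry; apply Z.eqb_neq; intro; subst; auto.
Qed.

Lemma at_most_zeros_sub k D D' q :
  (forall x, D' x -> D x) -> at_most_zeros k D q -> at_most_zeros k D' q.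
Proof. intros Hs [l [Hl Hi]]; exists l; split; auto. Qed.

Lemma at_most_zeros_remove k D D' q y :
  (forall x, D' x -> D x) -> D y -> ~ D' y -> q y = false ->
  at_most_zeros (S k) D q -> at_most_zeros k D' q.
Proof.
  intros Hs Dy nD'y qy [l [Hl Hi]].
  exists (remove Z.eq_dec y l). split.
  - pose proof (remove_length_lt Z.eq_dec l y (Hi y Dy qy)). lia.
  - intros x D'x qx. apply in_in_remove; auto.
    intros ->; contradiction.
Qed.

Lemma east_path_sub r D D' k q m :
  (forall x, D' x -> D x) -> east_path r D k q m -> east_path r D' k q m.
Proof.
  intros Hs [Hm Hc]; split; intros j Hj.
  - eapply east_move_sub; eauto.
  - eapply at_most_zeros_sub; eauto.
Qed.

Lemma east_path_drop_zero r D D' k q m :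
  (forall x, D' x -> D x) ->
  (forall j, (j <= m)%nat -> exists y, D y /\ ~ D' y /\ q j y = false) ->
  east_path r D (S k) q m -> east_path r D' k q m.
Proof.
  intros Hs Hzero [Hm Hc]; split; intros j Hj.
  - eapply east_move_sub; eauto.
  - destruct (Hzero j Hj) as [y [Dy [nD'y qy]]].
    eapply at_most_zeros_remove; eauto.
Qed.

Lemma east_path_rev r D k q m a b : (a <= b <= m)%nat ->
  east_path r D k q m -> east_path r D k (fun t => q (b - t)%nat) (b - a).
Proof.
  intros Hab [Hm Hc]. split; intros t Ht.
  - apply east_move_sym.
    replace (b - t)%nat with (S (b - S t)) by lia. apply Hm. lia.
  - apply Hc. lia.
Qed.

Lemma east_path_shift r D k q m a b : (a <= b <= m)%nat ->
  east_path r D k q m -> east_path r D k (fun t => q (a + t)%nat) (b - a).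
Proof.
  intros Hab [Hm Hc]. split; intros t Ht.
  - replace (a + S t)%nat with (S (a + t)) by lia. apply Hm. lia.
  - apply Hc. lia.
Qed.

Lemma last_occurrence (P : nat -> Prop) j : P 0%nat -> ~ P j ->
  exists t0, (t0 < j)%nat /\ P t0 /\ forall t, (t0 < t <= j)%nat -> ~ P t.
Proof.
  induction j as [|j IH]; intros H0 Hj; [contradiction|].
  destruct (classic (P j)) as [Pj|nPj].
  - exists j; split; [lia|split; auto]. intros t Ht. replace t with (S j) by lia; auto.
  - destruct (IH H0 nPj) as [t0 [Ht0 [Pt0 Hafter]]].
    exists t0; split; [lia|split; auto].
    intros t Ht. destruct (Nat.eq_dec t (S j)) as [->|]; auto. apply Hafter; lia.
Qed.

Lemma leftmost_true (f : Z -> bool) c y : c <= y -> f y = true ->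
  exists y0, c <= y0 <= y /\ f y0 = true /\ forall x, c <= x < y0 -> f x = false.
Proof.
  intros Hcy Hfy.
  assert (Hwf : forall N y, c <= y -> y - c < Z.of_nat N -> f y = true ->
    exists y0, c <= y0 <= y /\ f y0 = true /\ forall x, c <= x < y0 -> f x = false).
  { induction N as [|N IH]; intros y' Hc HN Hf; [lia|].
    destruct (classic (exists x, c <= x < y' /\ f x = true)) as [[x [Hx Fx]]|Hnone].
    - destruct (IH x) as [y0 [H1 H2]]; try lia; auto. exists y0; split; [lia|auto].
    - exists y'; split; [lia|split; auto]. intros x Hx.
      destruct (f x) eqn:E; auto. exfalso; apply Hnone; eauto. }
  apply (Hwf (S (Z.to_nat (y - c)))); auto. lia.
Qed.

Lemma east_path_last_flip r D k q m j y :
  east_path r D k q m -> (j <= m)%nat -> D y -> q 0%nat y = true -> q j y = false ->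
  exists t0 d, (t0 < j)%nat /\ 1 <= d <= r /\ (D (y - d) -> q (S t0) (y - d) = false) /\
    forall t, (t0 < t <= j)%nat -> q t y = false.
Proof.
  intros [Hm _] Hj Dy H0 Hjy.
  destruct (last_occurrence (fun t => q t y = true) j) as [t0 [Ht0 [Hon Hoff]]];
    [auto|rewrite Hjy; discriminate|].
  assert (Hoff' : forall t, (t0 < t <= j)%nat -> q t y = false)
    by (intros t Ht; apply Bool.not_true_is_false, Hoff, Ht).
  destruct (Hm t0 ltac:(lia)) as [Hid|[s [Ds [Hf [d [Hd Hz]]]]]].
  { specialize (Hoff' (S t0) ltac:(lia)). rewrite Hid, Hon in Hoff' by auto.
    discriminate. }
  assert (Hs : s = y).
  { specialize (Hoff' (S t0) ltac:(lia)). rewrite Hf, Hon in Hoff' by auto.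
    destruct (Z.eqb y s) eqn:E; [|discriminate]. symmetry; apply Z.eqb_eq, E. }
  subst s. exists t0, d. split; [auto|split; [auto|split; [|auto]]].
  intros Dyd. rewrite Hf by auto.
  replace (Z.eqb (y - d) y) with false by (symmetry; apply Z.eqb_neq; lia). auto.
Qed.

Lemma east_move_from_ones r c z q q' : 0 <= r ->
  all_ones (fun x => c <= x <= z) q -> east_move r (fun x => c <= x <= z) q q' ->
  all_ones (fun x => c + r <= x <= z) q'.
Proof.
  intros Hr Hon [Hid|[s [Ds [Hf [d [Hd Hz]]]]]] x Hx.
  - rewrite Hid by lia. apply Hon; lia.
  - assert (Hs : s - d < c).
    { destruct (Z_lt_le_dec (s - d) c) as [|Hc]; [auto|].
      rewrite Hon in Hz by lia. discriminate (Hz ltac:(lia)). }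
    rewrite Hf by lia.
    replace (Z.eqb x s) with false by (symmetry; apply Z.eqb_neq; lia).
    apply Hon; lia.
Qed.

Definition zeros_within_span (r : Z) (k : nat) : Prop :=
  forall D c q m, (forall x, D x -> c <= x) -> east_path r D k q m -> all_ones D (q 0%nat) ->
  forall j z, (j <= m)%nat -> (forall x, c <= x <= z -> D x) -> q j z = false ->
  z <= c - 1 + east_span r k.

Definition zero_near_left_end (r : Z) (k : nat) : Prop :=
  forall D c q m, (forall x, D x -> c <= x) -> east_path r D (S k) q m -> all_ones D (q 0%nat) ->
  forall j y, (j <= m)%nat -> c <= y -> (forall x, c <= x <= y -> D x) -> q j y = false ->
  exists v, c <= v <= c - 1 + east_span r k + r /\ v <= y /\ q j v = false.

Lemma zeros_within_span_0 r : zeros_within_span r 0.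
Proof.
  intros D c q m Dc [_ Hc] _ j z Hj Hz Hjz. simpl.
  destruct (Z_lt_le_dec z c) as [Hzc|Hcz]; [lia|].
  destruct (Hc j Hj) as [[|a l] [Hl Hi]]; simpl in Hl; [|lia].
  exfalso; apply (Hi z); auto. apply Hz; lia.
Qed.

Lemma zero_near_left_end_of_span r k :
  0 <= r -> zeros_within_span r k -> zero_near_left_end r k.
Proof.
  intros Hr Hspan D c q m Dc Hp H0 j y Hj Hcy Hy Hjy.
  pose proof (east_span_nonneg r k Hr).
  destruct (leftmost_true (fun x => negb (q j x)) c y Hcy) as [y0 [Hy0 [Hf0 Hleft]]];
    [rewrite Hjy; auto|].
  apply Bool.negb_true_iff in Hf0.
  destruct (Z_le_gt_dec y0 (c - 1 + east_span r k + r)) as [Hle|Hgt].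
  { exists y0; split; [|split]; auto; lia. }
  exfalso.
  assert (Dy0 : D y0) by (apply Hy; lia).
  destruct (east_path_last_flip r D (S k) q m j y0 Hp Hj Dy0 (H0 y0 Dy0) Hf0)
    as [t0 [d [Ht0 [Hd [Hw Hoff]]]]].
  (* Read backwards from time j, the path keeps y0 as a spare zero, starts all
     ones left of y0 and ends with the zero at y0 - d that enabled the last flip. *)
  set (D' := fun x => D x /\ x < y0).
  assert (Hp' : east_path r D' k (fun t => q (j - t)%nat) (j - S t0)).
  { apply east_path_drop_zero with (D := D).
    - intros x [Dx _]; auto.
    - intros t Ht. exists y0. split; [apply Hy; lia|split; [unfold D'; lia|]].
      apply Hoff; lia.
    - apply (east_path_rev r D (S k) q m); [lia|auto]. }
  assert (Hon : all_ones D' (q (j - 0)%nat)).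
  { intros x [Dx Hx]. rewrite Nat.sub_0_r.
    specialize (Hleft x ltac:(split; [apply Dc|]; auto)).
    destruct (q j x); auto. }
  assert (Hbound := Hspan D' c _ _ (fun x Hx => Dc x (proj1 Hx)) Hp' Hon (j - S t0)%nat (y0 - d)).
  cbv beta in Hbound. replace (j - (j - S t0))%nat with (S t0) in Hbound by lia.
  enough (y0 - d <= c - 1 + east_span r k) by lia.
  apply Hbound; [lia| |apply Hw, Hy; lia].
  intros x Hx; split; [apply Hy|]; lia.
Qed.

Lemma zeros_within_span_S r k :
  0 <= r -> zeros_within_span r k -> zeros_within_span r (S k).
Proof.
  intros Hr Hspan D c q m Dc Hp H0 j z Hj Hz Hjz.
  pose proof (east_span_nonneg r k Hr).
  change (east_span r (S k)) with (2 * east_span r k + r).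
  set (B := c - 1 + east_span r k + r).
  destruct (Z_le_gt_dec z B) as [Hle|Hgt]; [unfold B in Hle; lia|].
  set (D0 := fun x => c <= x <= z).
  assert (Hp0 : east_path r D0 (S k) q m) by (apply east_path_sub with D; auto).
  destruct (last_occurrence (fun t => all_ones D0 (q t)) j) as [t0 [Ht0 [Hon Hoff]]].
  { intros x Hx; apply H0, Hz, Hx. }
  { intros Hones. rewrite (Hones z) in Hjz; [discriminate|unfold D0; lia]. }
  (* After the last time [c, z] is all ones, a zero stays in [c, B], leaving
     only k zeroes for (B, z], which the first flip cannot reach. *)
  assert (Hzero : forall t, (t0 < t <= j)%nat -> exists v, c <= v <= B /\ q t v = false).
  { intros t Ht. destruct (not_all_ones_zero D0 (q t) (Hoff t Ht)) as [y [Dy Hty]].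
    destruct (zero_near_left_end_of_span r k Hr Hspan D0 c q m (fun x Hx => proj1 Hx) Hp0
      (fun x Hx => H0 x (Hz x Hx)) t y ltac:(lia) (proj1 Dy)
      ltac:(intros x Hx; unfold D0 in *; lia) Hty) as [v [Hv [_ Htv]]].
    exists v; split; [unfold B; lia|auto]. }
  assert (Hones : all_ones (fun x => B + 1 <= x <= z) (q (S t0 + 0)%nat)).
  { rewrite Nat.add_0_r. intros x Hx.
    apply (east_move_from_ones r c z (q t0)); [auto|auto|apply Hp0; lia|unfold B in *; lia]. }
  assert (Hp' : east_path r (fun x => B + 1 <= x <= z) k
                  (fun t => q (S t0 + t)%nat) (j - S t0)).
  { apply east_path_drop_zero with D0.
    - intros x Hx; unfold D0; lia.
    - intros t Ht. destruct (Hzero (S t0 + t)%nat ltac:(lia)) as [v [Hv Htv]].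
      exists v; unfold D0; split; [|split]; auto; lia.
    - apply (east_path_shift r D0 (S k) q m); [lia|auto]. }
  assert (Hbound := Hspan _ (B + 1) _ _ (fun x Hx => proj1 Hx) Hp' Hones (j - S t0)%nat z).
  cbv beta in Hbound. replace (S t0 + (j - S t0))%nat with j in Hbound by lia.
  enough (z <= B + 1 - 1 + east_span r k) by (unfold B in *; lia).
  apply Hbound; auto; lia.
Qed.

Lemma zero_near_left_end_all r k : 0 <= r -> zero_near_left_end r k.
Proof.
  intros Hr. apply zero_near_left_end_of_span; [auto|].
  induction k as [|k IH]; [apply zeros_within_span_0|apply zeros_within_span_S; auto].
Qed.

Lemma maxl_ge a l : In a l -> a <= maxl l.
Proof.
  induction l as [|b l IH]; simpl; [tauto|].
  intros [<-|Hin]; [lia|]. specialize (IH Hin); lia.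
Qed.

Lemma maxl_nonneg l : 0 <= maxl l.
Proof. induction l; simpl; lia. Qed.

Lemma range_r_nonneg U : 0 <= range_r U.
Proof. apply maxl_nonneg. Qed.

Lemma abs_le_range_r U X x : In X U -> In x X -> Z.abs x <= range_r U.
Proof.
  intros HX Hx. unfold range_r.
  eapply Z.le_trans; [|apply maxl_ge, in_map, HX]. cbv beta.
  eapply Z.le_trans; [|apply maxl_ge, in_map; right; exact Hx]. cbv beta.
  eapply Z.le_trans; [|apply maxl_ge, in_map; left; reflexivity]. cbv beta.
  rewrite Z.sub_0_r; lia.
Qed.

Lemma legal_move_east_move U Lam D eta eta' :
  update_family U -> neg1_stable U -> (forall x, D x -> Lam x) ->
  legal_move U Lam eta eta' -> east_move (range_r U) D eta eta'.
Proof.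
  intros HU Hs HD [->|[s [Ls [-> [X [HX Hz]]]]]]; [left; auto|].
  assert (Hneg : exists x, In x X /\ x < 0).
  { apply NNPP; intros Hn. apply Hs. exists X; split; [auto|].
    intros x Hx. destruct (Z.eq_dec x 0) as [->|]; [now apply HU in HX|].
    apply Z.nle_gt; intros Hx0. apply Hn; exists x; split; [auto|lia]. }
  destruct Hneg as [x [Hx Hx0]].
  pose proof (abs_le_range_r U X x HX Hx).
  destruct (classic (D s)) as [Ds|nDs].
  - right. exists s. split; [auto|split; [reflexivity|]].
    exists (- x). split; [lia|]. replace (s - - x) with (s + x) by lia.
    intros Dsx. exact (Hz x Hx (HD _ Dsx)).
  - left. intros y Dy. unfold flip.
    replace (Z.eqb y s) with false; auto.
    symmetry; apply Z.eqb_neq; intros ->; contradiction.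
Qed.

Lemma V_east_path U n Lam D eta :
  update_family U -> neg1_stable U -> (forall x, D x -> Lam x) -> V U n Lam eta ->
  exists m p, east_path (range_r U) D n p m /\ p 0%nat = ones /\ p m = eta.
Proof.
  intros HU Hs HD [m [p [_ [Hp0 [Hpm [Hleg Hcnt]]]]]].
  exists m, p. split; [split|split; auto]; intros j Hj.
  - apply (legal_move_east_move U Lam); auto.
  - apply (at_most_zeros_sub n Lam); auto.
Qed.

Lemma a_n_east_span U n : a_n U n = east_span (range_r U) n.
Proof. unfold a_n. rewrite east_span_eq. reflexivity. Qed.

Lemma b_n_le_succ U n : b_n U n <= b_n U (S n).
Proof.
  pose proof (range_r_nonneg U) as Hr. unfold b_n. rewrite Nat2Z.inj_succ.
  assert (Hpow : 2 ^ (Z.of_nat n - 1) <= 2 ^ (Z.succ (Z.of_nat n) - 1))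
    by (apply Z.pow_le_mono_r; lia).
  assert (0 <= 2 ^ (Z.of_nat n - 1)) by (apply Z.pow_nonneg; lia).
  assert (0 <= range_r U * 2 ^ (Z.of_nat n - 1)) by (apply Z.mul_nonneg_nonneg; lia).
  nia.
Qed.

Theorem lemma3p1 (U : list (list Z)) (n : nat) :
  update_family U -> neg1_stable U -> (1 <= n)%nat -> H U (n - 1) ->
  forall Lam : Z -> Prop, (forall x, P U n x -> Lam x) ->
  forall eta : config, V U n Lam eta ->
  ~ (forall x, Lam x -> eta x = true) ->
  exists x, Lam x /\ ~ P U (n - 1) x /\ eta x = false.
Proof.
  intros HU Hs Hn _ Lam HP eta HV Hne.
  destruct n as [|k]; [lia|]. replace (S k - 1)%nat with k by lia.
  destruct (not_all_ones_zero Lam eta Hne) as [x0 [Lx0 Hx0]].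
  destruct (classic (P U k x0)) as [Px0|nPx0]; [|now exists x0].
  destruct (V_east_path U (S k) Lam (P U (S k)) eta HU Hs HP HV) as [m [p [Hp [Hp0 Hpm]]]].
  pose proof (range_r_nonneg U) as Hr. pose proof (b_n_le_succ U k).
  pose proof (east_span_nonneg (range_r U) k Hr).
  pose proof (a_n_east_span U k) as Hak.
  assert (Ha : a_n U (S k) = 2 * a_n U k + range_r U) by now rewrite !a_n_east_span.
  unfold P in Px0.
  destruct (zero_near_left_end_all (range_r U) k Hr (P U (S k)) (- a_n U (S k)) p m
    ltac:(unfold P; lia) Hp ltac:(rewrite Hp0; now intros x _) m x0 (le_n m)
    ltac:(lia) ltac:(unfold P; lia) ltac:(now rewrite Hpm)) as [v [Hv [Hvx0 Hpv]]].
  exists v. rewrite <- Hpm. unfold P. split; [apply HP; unfold P|split]; auto; lia.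
Qed.
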